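(* Let $\varepsilon\neq0$ and let $\mathbf x:\mathbb R\to\mathbb R^3$ be a solution of the $\varepsilon$-revised system $$\dot{\mathbf x}=\mathbf x\times\mathbf m(\mathbf x)+\varepsilon[(\mathbf x\times\mathbf m(\mathbf x))\times\mathbf m(\mathbf x)].$$ Then there exist equilibrium points $\mathbf x_m,\mathbf x_M\in\mathbf E$ such that $$\lim_{t\to-\infty}\mathbf x(t)=\mathbf x_M\quad\text{and}\quad\lim_{t\to+\infty}\mathbf x(t)=\mathbf x_m .$$
   Context: Fix constants $0<a_1<a_2<a_3$ and $a,b,c\in\mathbb R$. Set $\mathbf m(\mathbf x)=(a_1x^1+a,\ a_2x^2+b,\ a_3x^3+c)$; $\times$ is the cross product. $\mathbf E=\{\mathbf x\in\mathbb R^3:\mathbf x\times\mathbf m(\mathbf x)=\mathbf 0\}$ is the set of equilibrium points of the $\varepsilon$-revised system (for $\varepsilon\ne0$). *)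

From Stdlib Require Import Reals.
From Coquelicot Require Import Coquelicot.
Open Scope R_scope.

Definition vec3 := (R * R * R)%type.

Definition v3 (x1 x2 x3 : R) : vec3 := (x1, x2, x3).
Definition c1 (v : vec3) : R := fst (fst v).
Definition c2 (v : vec3) : R := snd (fst v).
Definition c3 (v : vec3) : R := snd v.

Definition cross (u v : vec3) : vec3 :=
  v3 (c2 u * c3 v - c3 u * c2 v)
     (c3 u * c1 v - c1 u * c3 v)
     (c1 u * c2 v - c2 u * c1 v).

Definition vadd (u v : vec3) : vec3 := v3 (c1 u + c1 v) (c2 u + c2 v) (c3 u + c3 v).
Definition vscal (k : R) (u : vec3) : vec3 := v3 (k * c1 u) (k * c2 u) (k * c3 u).

Definition mfield (a1 a2 a3 a b c : R) (x : vec3) : vec3 :=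
  v3 (a1 * c1 x + a) (a2 * c2 x + b) (a3 * c3 x + c).

Definition revised_rhs (a1 a2 a3 a b c eps : R) (x : vec3) : vec3 :=
  let m := mfield a1 a2 a3 a b c x in
  vadd (cross x m) (vscal eps (cross (cross x m) m)).

Definition Eq_set (a1 a2 a3 a b c : R) (x : vec3) : Prop :=
  cross x (mfield a1 a2 a3 a b c x) = v3 0 0 0.

Definition is_revised_solution (a1 a2 a3 a b c eps : R) (x : R -> vec3) : Prop :=
  forall t : R, is_derive x t (revised_rhs a1 a2 a3 a b c eps (x t)).

(* The energy [sum_i (a_i x_i + 2 d_i) x_i], with [d = (a, b, c)], is conserved, so the
   trajectory is bounded, and [d/dt |x|^2 = -2 eps |x × m(x)|^2]. Hence [|x|^2] converges to some
   [rho] and, by Barbalat's lemma, [|x × m(x)|^2 -> 0]. If [rho > 0], the residual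
   [m(x) - lambda x] of the Rayleigh quotient [lambda = x·m(x) / |x|^2] tends to 0, and every value
   taken by [lambda] at arbitrarily large times is a root of a polynomial of degree 6 with leading
   coefficient [rho]. These roots are isolated and [lambda] is continuous, so [lambda] converges
   to some [l]; then [x_i = (residual_i - d_i) / (a_i - l)] converges whenever [a_i <> l], and the
   at most one remaining coordinate is recovered from [|x|^2 -> rho]. The limit [y] satisfies
   [y × m(y) = 0]. Reversing time replaces eps by [- eps] and gives the limit at [-oo]. *)

From Stdlib Require Import Reals Lra Psatz Classical.
From Coquelicot Require Import Coquelicot.
Open Scope R_scope.

Definition tends_to (f : R -> R) (l : R) : Prop :=
  forall eps, 0 < eps -> exists T, forall t, T <= t -> Rabs (f t - l) < eps.

Lemma tends_to_is_lim f l : tends_to f l <-> is_lim f p_infty l.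
Proof.
rewrite <- is_lim_spec; split.
- intros H eps; destruct (H eps (cond_pos eps)) as [T HT].
  exists T; intros t Ht; apply HT; lra.
- intros H eps Heps; destruct (H (mkposreal eps Heps)) as [T HT].
  exists (T + 1); intros t Ht; apply HT; simpl; lra.
Qed.

Lemma tends_to_const l : tends_to (fun _ => l) l.
Proof. apply tends_to_is_lim, is_lim_const. Qed.

Lemma tends_to_plus f g lf lg :
  tends_to f lf -> tends_to g lg -> tends_to (fun t => f t + g t) (lf + lg).
Proof. rewrite !tends_to_is_lim; apply is_lim_plus'. Qed.

Lemma tends_to_opp f l : tends_to f l -> tends_to (fun t => - f t) (- l).
Proof. rewrite !tends_to_is_lim; apply is_lim_opp. Qed.

Lemma tends_to_minus f g lf lg :
  tends_to f lf -> tends_to g lg -> tends_to (fun t => f t - g t) (lf - lg).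
Proof. rewrite !tends_to_is_lim; apply is_lim_minus'. Qed.

Lemma tends_to_mult f g lf lg :
  tends_to f lf -> tends_to g lg -> tends_to (fun t => f t * g t) (lf * lg).
Proof. rewrite !tends_to_is_lim; intros Hf Hg; exact (is_lim_mult f g p_infty lf lg Hf Hg I). Qed.

Lemma tends_to_div f g lf lg : lg <> 0 ->
  tends_to f lf -> tends_to g lg -> tends_to (fun t => f t / g t) (lf / lg).
Proof.
rewrite !tends_to_is_lim; intros Hlg Hf Hg.
apply (is_lim_div f g p_infty lf lg Hf Hg); [congruence | exact I].
Qed.

Lemma tends_to_unique f l l' : tends_to f l -> tends_to f l' -> l = l'.
Proof.
rewrite !tends_to_is_lim; intros H H'.
apply is_lim_unique in H; apply is_lim_unique in H'; congruence.
Qed.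

Lemma tends_to_eventually_ext f g l :
  (exists T, forall t, T <= t -> f t = g t) -> tends_to f l -> tends_to g l.
Proof.
intros [T HT] Hf eps Heps; destruct (Hf eps Heps) as [T' HT'].
exists (Rmax T T'); intros t Ht; rewrite <- HT.
- apply HT'; eapply Rle_trans; [apply Rmax_r | exact Ht].
- eapply Rle_trans; [apply Rmax_l | exact Ht].
Qed.

Lemma tends_to_ext f g l : (forall t, f t = g t) -> tends_to f l -> tends_to g l.
Proof. intros H; apply tends_to_eventually_ext; exists 0; auto. Qed.

Lemma tends_to_lower_bound f m l : (forall t, m <= f t) -> tends_to f l -> m <= l.
Proof.
intros Hm Hf; apply Rnot_lt_le; intros Hlt.
destruct (Hf (m - l)) as [T HT]; [lra|].
specialize (HT T (Rle_refl T)); specialize (Hm T); apply Rabs_def2 in HT; lra.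
Qed.

Lemma tends_to_frequently_eq f l k :
  tends_to f l -> (forall T, exists t, T <= t /\ f t = k) -> k = l.
Proof.
intros Hf Hk; apply NNPP; intros Hne.
destruct (Hf (Rabs (k - l))) as [T HT]; [apply Rabs_pos_lt; lra|].
destruct (Hk T) as [t [Ht Hft]]; specialize (HT t Ht); rewrite Hft in HT; lra.
Qed.

Lemma tends_to_0_of_sq_le f g :
  (exists T, forall t, T <= t -> f t * f t <= g t) -> tends_to g 0 -> tends_to f 0.
Proof.
intros [T Hfg] Hg eps Heps; destruct (Hg (eps * eps)) as [T' HT']; [nra|].
exists (Rmax T T'); intros t Ht.
assert (H1 := Hfg t ltac:(eapply Rle_trans; [apply Rmax_l | exact Ht])).
assert (H2 := HT' t ltac:(eapply Rle_trans; [apply Rmax_r | exact Ht])).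
rewrite Rminus_0_r in *; apply Rabs_def2 in H2.
rewrite <- (Rabs_right eps) by lra; apply Rsqr_lt_abs_0; unfold Rsqr; lra.
Qed.
Definition bounded (f : R -> R) : Prop := exists M, forall t, Rabs (f t) <= M.

Lemma mean_value f df : (forall t, is_derive f t (df t)) ->
  forall u v, exists c, Rmin u v <= c <= Rmax u v /\ f v - f u = df c * (v - u).
Proof.
intros Hf u v; apply (MVT_gen f u v df); [intros; apply Hf |].
intros t _; apply continuity_pt_filterlim, (ex_derive_continuous f t).
exists (df t); apply Hf.
Qed.

Lemma derive_zero_constant f : (forall t, is_derive f t 0) -> forall t, f t = f 0.
Proof. intros Hf t; destruct (mean_value f (fun _ => 0) Hf 0 t) as [c [_ Hc]]; lra. Qed.

Lemma nondecreasing_bounded_tends_to f M :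
  (forall s t, s <= t -> f s <= f t) -> (forall t, f t <= M) -> exists l, tends_to f l.
Proof.
intros Hmono HM.
destruct (completeness (fun y => exists t, y = f t)) as [l [Hub Hlub]].
- exists M; intros y [t ->]; apply HM.
- exists (f 0), 0; reflexivity.
- exists l; intros eps Heps.
  destruct (classic (exists t, l - eps < f t)) as [[T HT] | Hnone].
  + exists T; intros t Ht.
    assert (f t <= l) by (apply Hub; eauto).
    assert (f T <= f t) by (apply Hmono; exact Ht).
    apply Rabs_def1; lra.
  + assert (l <= l - eps); [|lra].
    apply Hlub; intros y [t ->]; apply Rnot_lt_le; intros Hlt; apply Hnone; eauto.
Qed.

Lemma derive_sign_bounded_tends_to f q k :
  (forall t, is_derive f t (k * q t)) -> (forall t, 0 <= q t) ->
  bounded f -> exists l, tends_to f l.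
Proof.
intros Hf Hq [M HM].
assert (Hbound : forall t, - M <= f t <= M) by (intros t; apply Rabs_le_between, HM).
destruct (Rle_or_lt 0 k) as [Hk | Hk].
- apply (nondecreasing_bounded_tends_to f M).
  + intros s t Hst; destruct (mean_value f _ Hf s t) as [c [_ Hc]].
    specialize (Hq c).
    assert (0 <= k * q c * (t - s)) by (apply Rmult_le_pos; [apply Rmult_le_pos |]; lra).
    lra.
  + intros t; specialize (Hbound t); lra.
- destruct (nondecreasing_bounded_tends_to (fun t => - f t) M) as [l Hl].
  + intros s t Hst; destruct (mean_value f _ Hf s t) as [c [_ Hc]].
    specialize (Hq c).
    assert (0 <= - k * q c * (t - s)) by (apply Rmult_le_pos; [apply Rmult_le_pos |]; lra).
    lra.
  + intros t; specialize (Hbound t); lra.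
  + exists (- l); apply (tends_to_ext (fun t => - - f t)); [intros; ring |].
    apply tends_to_opp, Hl.
Qed.

Lemma continuous_eventually_one_side f T y : continuity f ->
  (forall t, T <= t -> f t <> y) ->
  (forall t, T <= t -> f t < y) \/ (forall t, T <= t -> y < f t).
Proof.
intros Hc Hne.
assert (Hivt : forall t, T <= t -> Rmin (f T) (f t) <= y <= Rmax (f T) (f t) -> False).
{ intros t Ht Hy; destruct (IVT_gen f T t y Hc Hy) as [s [Hs Hfs]].
  rewrite Rmin_left, Rmax_right in Hs by exact Ht.
  exact (Hne s ltac:(lra) Hfs). }
destruct (Rlt_or_le (f T) y) as [Hlt | Hle]; [left | right]; intros t Ht;
  apply Rnot_le_lt; intros H; apply (Hivt t Ht);
  unfold Rmin, Rmax; destruct Rle_dec; lra.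
Qed.

Lemma tends_to_of_sparse_cluster_values lam G : continuity lam -> bounded lam ->
  (forall mu, (forall T, exists t, T <= t /\ lam t = mu) -> G mu = 0) ->
  (forall z eta, 0 < eta -> exists mu, z < mu < z + eta /\ G mu <> 0) ->
  exists l, tends_to lam l.
Proof.
intros Hc [M HM] Hcluster Hsparse.
assert (HMb : forall t, - M <= lam t <= M) by (intros t; apply Rabs_le_between, HM).
set (eventually_above := fun mu => exists T, forall t, T <= t -> mu < lam t).
destruct (completeness eventually_above) as [l [Hub Hlub]].
- exists M; intros mu [T HT]; specialize (HT T (Rle_refl T)); specialize (HMb T); lra.
- exists (- M - 1), 0; intros t _; specialize (HMb t); lra.
- exists l; intros eta Heta.
  assert (Hlow : exists T, forall t, T <= t -> l - eta < lam t).
  { apply NNPP; intros Hno; assert (l <= l - eta); [|lra].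
    apply Hlub; intros mu [T HT]; apply Rnot_lt_le; intros Hmu.
    apply Hno; exists T; intros t Ht; specialize (HT t Ht); lra. }
  assert (Hup : exists T, forall t, T <= t -> lam t < l + eta).
  { destruct (Hsparse l eta Heta) as [mu [Hmu HG]].
    assert (Hmiss : exists T, forall t, T <= t -> lam t <> mu).
    { apply NNPP; intros Hno; apply HG, Hcluster; intros T; apply NNPP; intros HT.
      apply Hno; exists T; intros t Ht Heq; apply HT; eauto. }
    destruct Hmiss as [T HT].
    destruct (continuous_eventually_one_side lam T mu Hc HT) as [Hbelow | Habove].
    - exists T; intros t Ht; specialize (Hbelow t Ht); lra.
    - assert (mu <= l) by (apply Hub; exists T; exact Habove); lra. }
  destruct Hlow as [T1 H1], Hup as [T2 H2].
  exists (Rmax T1 T2); intros t Ht; apply Rabs_def1.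
  + specialize (H2 t ltac:(eapply Rle_trans; [apply Rmax_r | exact Ht])); lra.
  + specialize (H1 t ltac:(eapply Rle_trans; [apply Rmax_l | exact Ht])); lra.
Qed.

Lemma tends_to_sqrt_of_sq f L : 0 < L -> (exists T, forall t, T <= t -> 0 < f t) ->
  tends_to (fun t => f t * f t) L -> tends_to f (sqrt L).
Proof.
intros HL [T Hpos] Hsq eps Heps.
assert (Hs : 0 < sqrt L) by (apply sqrt_lt_R0, HL).
assert (Hss : sqrt L * sqrt L = L) by (apply sqrt_sqrt; lra).
destruct (Hsq (eps * sqrt L)) as [T' HT']; [nra|].
exists (Rmax T T'); intros t Ht.
specialize (Hpos t ltac:(eapply Rle_trans; [apply Rmax_l | exact Ht])).
specialize (HT' t ltac:(eapply Rle_trans; [apply Rmax_r | exact Ht])).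
(* |f - sqrt L| * sqrt L <= |f - sqrt L| * (f + sqrt L) = |f^2 - L| *)
replace (f t * f t - L) with ((f t - sqrt L) * (f t + sqrt L)) in HT' by nra.
rewrite Rabs_mult, (Rabs_right (f t + sqrt L)) in HT' by lra.
assert (Rabs (f t - sqrt L) * sqrt L <= Rabs (f t - sqrt L) * (f t + sqrt L))
  by (apply Rmult_le_compat_l; [apply Rabs_pos | lra]).
nra.
Qed.

Lemma tends_to_of_sq f L : continuity f ->
  tends_to (fun t => f t * f t) L -> exists l, tends_to f l.
Proof.
intros Hc Hsq.
assert (HL : 0 <= L) by (apply (tends_to_lower_bound (fun t => f t * f t)); [intros t; nra | exact Hsq]).
destruct (Req_dec L 0) as [-> | HL0].
- exists 0; apply (tends_to_0_of_sq_le f (fun t => f t * f t)); [exists 0; intros; lra | exact Hsq].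
- destruct (Hsq (L / 2)) as [T HT]; [lra|].
  assert (Hnz : forall t, T <= t -> f t <> 0).
  { intros t Ht Hf; specialize (HT t Ht); rewrite Hf in HT; apply Rabs_def2 in HT; lra. }
  destruct (continuous_eventually_one_side f T 0 Hc Hnz) as [Hneg | Hpos].
  + exists (- sqrt L); apply (tends_to_ext (fun t => - - f t)); [intros; ring |].
    apply tends_to_opp, tends_to_sqrt_of_sq; [lra | | ].
    * exists T; intros t Ht; specialize (Hneg t Ht); lra.
    * apply (tends_to_ext (fun t => f t * f t)); [intros; ring | exact Hsq].
  + exists (sqrt L); apply tends_to_sqrt_of_sq; [lra | exists T; exact Hpos | exact Hsq].
Qed.

Lemma tends_to_of_sum_sq f g h r lg lh : continuity f ->
  tends_to (fun t => f t * f t + g t * g t + h t * h t) r ->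
  tends_to g lg -> tends_to h lh -> exists l, tends_to f l.
Proof.
intros Hc Hr Hg Hh; apply (tends_to_of_sq f (r - lg * lg - lh * lh) Hc).
apply (tends_to_ext (fun t => (f t * f t + g t * g t + h t * h t) - g t * g t - h t * h t));
  [intros; ring |].
repeat apply tends_to_minus; try apply tends_to_mult; assumption.
Qed.

Lemma tends_to_affine_solve u r lam A D l : A <> l ->
  tends_to lam l -> tends_to r 0 -> (forall t, r t = A * u t + D - lam t * u t) ->
  tends_to u (- D / (A - l)).
Proof.
intros Hl Hlam Hr Hdef.
destruct (Hlam (Rabs (A - l))) as [T HT]; [apply Rabs_pos_lt; lra|].
apply (tends_to_eventually_ext (fun t => (r t - D) / (A - lam t))).
- exists T; intros t Ht; rewrite Hdef; field.
  intros Heq; specialize (HT t Ht); replace (lam t - l) with (A - l) in HT by lra; lra.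
- replace (- D / (A - l)) with ((0 - D) / (A - l)) by (field; lra).
  apply tends_to_div; [lra | apply tends_to_minus, tends_to_const |
    apply tends_to_minus; [apply tends_to_const |]]; assumption.
Qed.


Lemma bounded_const k : bounded (fun _ => k).
Proof. exists (Rabs k); intros; lra. Qed.

Lemma bounded_plus f g : bounded f -> bounded g -> bounded (fun t => f t + g t).
Proof.
intros [M HM] [N HN]; exists (M + N); intros t.
eapply Rle_trans; [apply Rabs_triang | specialize (HM t); specialize (HN t); lra].
Qed.

Lemma bounded_opp f : bounded f -> bounded (fun t => - f t).
Proof. intros [M HM]; exists M; intros t; rewrite Rabs_Ropp; apply HM. Qed.

Lemma bounded_minus f g : bounded f -> bounded g -> bounded (fun t => f t - g t).
Proof. intros Hf Hg; exact (bounded_plus f _ Hf (bounded_opp g Hg)). Qed.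

Lemma bounded_mult f g : bounded f -> bounded g -> bounded (fun t => f t * g t).
Proof.
intros [M HM] [N HN]; exists (M * N); intros t; rewrite Rabs_mult.
apply Rmult_le_compat; auto using Rabs_pos.
Qed.

Definition lipschitz (f : R -> R) : Prop :=
  exists L, 0 <= L /\ forall t s, Rabs (f t - f s) <= L * Rabs (t - s).

Lemma bounded_derive_lipschitz f df :
  (forall t, is_derive f t (df t)) -> bounded df -> lipschitz f.
Proof.
intros Hf [M HM]; exists (Rabs M); split; [apply Rabs_pos |]; intros t s.
destruct (mean_value f df Hf s t) as [c [_ Hc]]; rewrite Hc, Rabs_mult.
apply Rmult_le_compat_r; [apply Rabs_pos | eapply Rle_trans; [apply HM | apply RRle_abs]].
Qed.

Lemma lipschitz_continuity f : lipschitz f -> continuity f.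
Proof.
intros [L [HL Hf]] t; apply continuity_pt_filterlim; intros P [eps HP].
assert (Hd : 0 < eps / (L + 1)) by (apply Rdiv_lt_0_compat; [apply cond_pos | lra]).
exists (mkposreal _ Hd); intros s Hs; apply HP.
change (Rabs (s - t) < eps / (L + 1)) in Hs; change (Rabs (f s - f t) < eps).
assert (Rabs (s - t) * (L + 1) < eps)
  by (apply (Rmult_lt_compat_r (L + 1)) in Hs; [field_simplify in Hs |]; lra).
specialize (Hf s t); pose proof (Rabs_pos (s - t)); nra.
Qed.

Lemma barbalat r q k rho : k <> 0 -> (forall t, is_derive r t (k * q t)) ->
  (forall t, 0 <= q t) -> lipschitz q -> tends_to r rho -> tends_to q 0.
Proof.
intros Hk Hr Hq [L [HL Hlip]] Hrho eta Heta.
set (tau := eta / (2 * (L + 1))).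
assert (Htau : 0 < tau) by (apply Rdiv_lt_0_compat; lra).
assert (HLtau : L * tau <= eta / 2)
  by (unfold tau; apply (Rmult_le_reg_l (2 * (L + 1))); [lra | field_simplify; nra]).
assert (Hk' : 0 < Rabs k) by (apply Rabs_pos_lt, Hk).
set (delta := Rabs k * tau * eta / 4).
assert (Hdelta : 0 < delta)
  by (unfold delta; assert (0 < Rabs k * tau) by (apply Rmult_lt_0_compat; lra); nra).
destruct (Hrho delta Hdelta) as [T HT].
exists T; intros t Ht.
rewrite Rminus_0_r, Rabs_right by (apply Rle_ge, Hq).
apply Rnot_le_lt; intros Hge.
(* [q >= eta / 2] on [t, t + tau], so [r] moves by at least [|k| tau eta / 2] there. *)
destruct (mean_value r _ Hr t (t + tau)) as [c [Hc Hmv]].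
rewrite Rmin_left, Rmax_right in Hc by lra.
assert (Hqc : eta / 2 <= q c).
{ specialize (Hlip t c); apply Rabs_le_between in Hlip.
  rewrite (Rabs_left1 (t - c)) in Hlip by lra.
  assert (L * - (t - c) <= L * tau) by (apply Rmult_le_compat_l; lra); lra. }
assert (Hmove : Rabs (r (t + tau) - r t) < 2 * delta).
{ replace (r (t + tau) - r t) with ((r (t + tau) - rho) - (r t - rho)) by ring.
  eapply Rle_lt_trans; [apply Rabs_triang |]; rewrite Rabs_Ropp.
  assert (H1 := HT t Ht); assert (H2 := HT (t + tau) ltac:(lra)); lra. }
rewrite Hmv, Rabs_mult, Rabs_mult, (Rabs_right (q c)), (Rabs_right (t + tau - t)) in Hmove
  by lra.
unfold delta in Hmove; replace (t + tau - t) with tau in Hmove by ring.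
assert (Rabs k * tau * (eta / 2) <= Rabs k * q c * tau).
{ replace (Rabs k * q c * tau) with (Rabs k * tau * q c) by ring.
  apply Rmult_le_compat_l; [apply Rmult_le_pos |]; lra. }
lra.
Qed.

Definition bounded_lipschitz (f : R -> R) : Prop := bounded f /\ lipschitz f.

Lemma bounded_lipschitz_const k : bounded_lipschitz (fun _ => k).
Proof.
split; [apply bounded_const | exists 0; split; [lra |]].
intros; rewrite Rminus_diag, Rabs_R0; lra.
Qed.

Lemma bounded_lipschitz_plus f g : bounded_lipschitz f -> bounded_lipschitz g ->
  bounded_lipschitz (fun t => f t + g t).
Proof.
intros [Bf [L [HL Hf]]] [Bg [K [HK Hg]]]; split; [apply bounded_plus; assumption |].
exists (L + K); split; [lra |]; intros t s.
replace (f t + g t - (f s + g s)) with ((f t - f s) + (g t - g s)) by ring.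
eapply Rle_trans; [apply Rabs_triang | specialize (Hf t s); specialize (Hg t s); lra].
Qed.

Lemma bounded_lipschitz_opp f : bounded_lipschitz f -> bounded_lipschitz (fun t => - f t).
Proof.
intros [Bf [L [HL Hf]]]; split; [apply bounded_opp, Bf |].
exists L; split; [exact HL |]; intros t s.
replace (- f t - - f s) with (- (f t - f s)) by ring; rewrite Rabs_Ropp; apply Hf.
Qed.

Lemma bounded_lipschitz_minus f g : bounded_lipschitz f -> bounded_lipschitz g ->
  bounded_lipschitz (fun t => f t - g t).
Proof. intros Hf Hg; exact (bounded_lipschitz_plus f _ Hf (bounded_lipschitz_opp g Hg)). Qed.

Lemma bounded_lipschitz_mult f g : bounded_lipschitz f -> bounded_lipschitz g ->
  bounded_lipschitz (fun t => f t * g t).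
Proof.
intros [[M HM] [L [HL Hf]]] [[N HN] [K [HK Hg]]].
split; [apply bounded_mult; [exists M | exists N]; assumption |].
assert (0 <= M) by (specialize (HM 0); pose proof (Rabs_pos (f 0)); lra).
assert (0 <= N) by (specialize (HN 0); pose proof (Rabs_pos (g 0)); lra).
exists (M * K + N * L); split; [nra |]; intros t s.
replace (f t * g t - f s * g s) with (f t * (g t - g s) + g s * (f t - f s)) by ring.
eapply Rle_trans; [apply Rabs_triang | rewrite !Rabs_mult].
assert (Rabs (f t) * Rabs (g t - g s) <= M * (K * Rabs (t - s)))
  by (apply Rmult_le_compat; auto using Rabs_pos).
assert (Rabs (g s) * Rabs (f t - f s) <= N * (L * Rabs (t - s)))
  by (apply Rmult_le_compat; auto using Rabs_pos).
lra.
Qed.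

Lemma bounded_lipschitz_div f g m : 0 < m -> (forall t, m <= g t) ->
  bounded_lipschitz f -> bounded_lipschitz g -> bounded_lipschitz (fun t => f t / g t).
Proof.
intros Hm Hgm Hf [Bg [L [HL Hg]]].
apply (bounded_lipschitz_mult f (fun t => / g t) Hf); split.
- exists (/ m); intros t; specialize (Hgm t).
  rewrite Rabs_right by (apply Rle_ge, Rlt_le, Rinv_0_lt_compat; lra).
  apply Rinv_le_contravar; lra.
- exists (L / (m * m)); split; [apply Rmult_le_pos; [lra | apply Rlt_le, Rinv_0_lt_compat; nra] |].
  intros t s; assert (Ht := Hgm t); assert (Hs := Hgm s).
  replace (/ g t - / g s) with (- (g t - g s) / (g t * g s)) by (field; lra).
  unfold Rdiv; rewrite Rabs_mult, Rabs_Ropp, Rabs_inv, (Rabs_right (g t * g s)) by nra.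
  assert (/ (g t * g s) <= / (m * m)) by (apply Rinv_le_contravar; nra).
  assert (0 <= / (g t * g s)) by (apply Rlt_le, Rinv_0_lt_compat; nra).
  apply (Rle_trans _ (L * Rabs (t - s) * / (m * m))); [| right; field; lra].
  apply Rmult_le_compat; auto using Rabs_pos.
Qed.

Lemma bounded_lipschitz_max f k : bounded_lipschitz f -> bounded_lipschitz (fun t => Rmax (f t) k).
Proof.
intros [[M HM] [L [HL Hf]]]; split.
- exists (Rmax M (Rabs k)); intros t; unfold Rmax at 1; destruct Rle_dec.
  + apply Rmax_r.
  + eapply Rle_trans; [apply HM | apply Rmax_l].
- exists L; split; [exact HL |]; intros t s; eapply Rle_trans; [| apply Hf].
  unfold Rmax; destruct (Rle_dec (f t) k), (Rle_dec (f s) k);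
    unfold Rabs; repeat destruct Rcase_abs; lra.
Qed.

Ltac polynomial_closure :=
  repeat first
    [ eassumption
    | apply tends_to_const | apply tends_to_plus | apply tends_to_minus
    | apply tends_to_mult | apply tends_to_opp
    | apply bounded_const | apply bounded_plus | apply bounded_minus
    | apply bounded_mult | apply bounded_opp
    | apply bounded_lipschitz_const | apply bounded_lipschitz_plus
    | apply bounded_lipschitz_minus | apply bounded_lipschitz_mult
    | apply bounded_lipschitz_opp ].

Lemma bounded_of_quadratic_bounded f p q M : 0 < p ->
  (forall t, (p * f t + q) * f t <= M) -> bounded f.
Proof.
intros Hp Hf; exists (1 + (2 * M + q * q / p) / p); intros t; specialize (Hf t).
assert (Hsq : f t * f t <= (2 * M + q * q / p) / p).
{ pose proof (Rle_0_sqr (p * f t + q)) as Hsqr; unfold Rsqr in Hsqr.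
  assert (p * ((p * f t + q) * f t) <= p * M) by (apply Rmult_le_compat_l; lra).
  apply (Rmult_le_reg_l (p * p)); [nra |].
  replace (p * p * ((2 * M + q * q / p) / p)) with (2 * p * M + q * q) by (field; lra).
  nra. }
assert (Habs : Rabs (f t) * Rabs (f t) = f t * f t)
  by (rewrite <- Rabs_mult; apply Rabs_right; nra).
destruct (Rle_dec (Rabs (f t)) 1); nra.
Qed.

Lemma quadratic_lower_bound p q y : 0 < p -> - (q * q / (4 * p)) <= (p * y + q) * y.
Proof.
intros Hp; apply (Rmult_le_reg_l (4 * p)); [lra |].
replace (4 * p * - (q * q / (4 * p))) with (- (q * q)) by (field; lra).
pose proof (Rle_0_sqr (2 * p * y + q)); unfold Rsqr in *; nra.
Qed.

Definition dot (u v : vec3) : R := c1 u * c1 v + c2 u * c2 v + c3 u * c3 v.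
Definition sqnorm (u : vec3) : R := dot u u.

Lemma sqnorm_nonneg u : 0 <= sqnorm u.
Proof. unfold sqnorm, dot; nra. Qed.

Lemma sqnorm_eq0 u : sqnorm u = 0 -> u = v3 0 0 0.
Proof.
destruct u as [[u1 u2] u3]; unfold sqnorm, dot, c1, c2, c3, v3; simpl; intros H.
assert (u1 = 0) by nra; assert (u2 = 0) by nra; assert (u3 = 0) by nra; subst; reflexivity.
Qed.

Lemma lagrange_identity u y : sqnorm y <> 0 ->
  sqnorm (vadd u (vscal (- (dot y u / sqnorm y)) y)) * sqnorm y = sqnorm (cross y u).
Proof.
destruct u as [[u1 u2] u3], y as [[y1 y2] y3].
unfold sqnorm, dot, vadd, vscal, cross, c1, c2, c3, v3; simpl; intros H; field; exact H.
Qed.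

Lemma scal_vec3 k (y : vec3) : scal k y = vscal k y.
Proof. destruct y as [[y1 y2] y3]; reflexivity. Qed.

Lemma is_derive_fst {V W : NormedModule R_AbsRing} (f : R -> V * W) t l :
  is_derive f t l -> is_derive (fun s => fst (f s)) t (fst l).
Proof.
intros H; apply (filterdiff_comp f fst _ fst H), filterdiff_linear, is_linear_fst.
Qed.

Lemma is_derive_snd {V W : NormedModule R_AbsRing} (f : R -> V * W) t l :
  is_derive f t l -> is_derive (fun s => snd (f s)) t (snd l).
Proof.
intros H; apply (filterdiff_comp f snd _ snd H), filterdiff_linear, is_linear_snd.
Qed.

Lemma is_derive_components (x : R -> vec3) t v : is_derive x t v ->
  is_derive (fun s => c1 (x s)) t (c1 v) /\ is_derive (fun s => c2 (x s)) t (c2 v) /\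
  is_derive (fun s => c3 (x s)) t (c3 v).
Proof.
intros H; pose proof (is_derive_fst _ _ _ H) as H12.
split; [| split]; [exact (is_derive_fst _ _ _ H12) | exact (is_derive_snd _ _ _ H12) |
  exact (is_derive_snd _ _ _ H)].
Qed.

Lemma is_derive_affine_mul f p q t v : is_derive f t v ->
  is_derive (fun s => (p * f s + q) * f s) t ((2 * p * f t + q) * v).
Proof.
intros Hf.
replace ((2 * p * f t + q) * v) with (scal v (2 * p * f t + q))
  by (change (v * (2 * p * f t + q) = (2 * p * f t + q) * v); ring).
apply (is_derive_comp (fun y => (p * y + q) * y) f); [| exact Hf].
auto_derive; [exact I | ring].
Qed.

Lemma is_derive_diag_quadratic (x : R -> vec3) t v p q : is_derive x t v ->
  is_derive (fun s => (c1 p * c1 (x s) + c1 q) * c1 (x s) + (c2 p * c2 (x s) + c2 q) * c2 (x s)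
                      + (c3 p * c3 (x s) + c3 q) * c3 (x s)) t
    ((2 * c1 p * c1 (x t) + c1 q) * c1 v + (2 * c2 p * c2 (x t) + c2 q) * c2 v
     + (2 * c3 p * c3 (x t) + c3 q) * c3 v).
Proof.
intros H; destruct (is_derive_components x t v H) as [H1 [H2 H3]].
apply (is_derive_plus (V := R_NormedModule)); [apply (is_derive_plus (V := R_NormedModule)) |];
  apply is_derive_affine_mul; assumption.
Qed.

Definition tends_to3 (x : R -> vec3) (y : vec3) : Prop :=
  tends_to (fun t => c1 (x t)) (c1 y) /\ tends_to (fun t => c2 (x t)) (c2 y) /\
  tends_to (fun t => c3 (x t)) (c3 y).

Lemma tends_to3_filterlim x y : tends_to3 x y -> filterlim x (Rbar_locally p_infty) (locally y).
Proof.
intros [H1 [H2 H3]] P [eps HP].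
destruct (H1 eps (cond_pos eps)) as [T1 HT1], (H2 eps (cond_pos eps)) as [T2 HT2],
  (H3 eps (cond_pos eps)) as [T3 HT3].
exists (Rmax T1 (Rmax T2 T3)); intros t Ht; apply HP.
pose proof (Rmax_l T1 (Rmax T2 T3)); pose proof (Rmax_r T1 (Rmax T2 T3)).
pose proof (Rmax_l T2 T3); pose proof (Rmax_r T2 T3).
specialize (HT1 t ltac:(lra)); specialize (HT2 t ltac:(lra)); specialize (HT3 t ltac:(lra)).
destruct (x t) as [[u1 u2] u3], y as [[y1 y2] y3]; split; [split |]; assumption.
Qed.

Lemma filterlim_m_infty_reverse {U : Type} (f : R -> U) (F : (U -> Prop) -> Prop) :
  filterlim (fun t => f (- t)) (Rbar_locally p_infty) F -> filterlim f (Rbar_locally m_infty) F.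
Proof.
intros H; apply (filterlim_ext (fun t => f (- - t))); [intros t; rewrite Ropp_involutive; reflexivity |].
exact (filterlim_comp _ _ _ Ropp (fun t => f (- t)) _ _ _ (filterlim_Rbar_opp m_infty) H).
Qed.

Section Flow.

Variables a1 a2 a3 a b c : R.

Local Notation m := (mfield a1 a2 a3 a b c).

Definition flow (s e : R) (y : vec3) : vec3 :=
  vadd (vscal s (cross y (m y))) (vscal e (cross (cross y (m y)) (m y))).

Definition is_solution (s e : R) (x : R -> vec3) : Prop :=
  forall t, is_derive x t (flow s e (x t)).

Definition energy (y : vec3) : R :=
  (a1 * c1 y + 2 * a) * c1 y + (a2 * c2 y + 2 * b) * c2 y + (a3 * c3 y + 2 * c) * c3 y.

Definition eq_defect (y : vec3) : R := sqnorm (cross y (m y)).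

Lemma Eq_set_eq_defect y : eq_defect y = 0 -> Eq_set a1 a2 a3 a b c y.
Proof. apply sqnorm_eq0. Qed.

Lemma revised_solution_is_solution eps x :
  is_revised_solution a1 a2 a3 a b c eps x -> is_solution 1 eps x.
Proof.
intros Hx t; replace (flow 1 eps (x t)) with (revised_rhs a1 a2 a3 a b c eps (x t)); [apply Hx |].
destruct (x t) as [[y1 y2] y3].
unfold flow, revised_rhs, vadd, vscal, cross, mfield, c1, c2, c3, v3; simpl; f_equal; [f_equal |]; ring.
Qed.

Lemma is_solution_reverse s e x :
  is_solution s e x -> is_solution (- s) (- e) (fun t => x (- t)).
Proof.
intros Hx t.
replace (flow (- s) (- e) (x (- t))) with (scal (-1) (flow s e (x (- t)))).
- apply (is_derive_comp x Ropp t); [apply Hx |].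
  auto_derive; [exact I | ring].
- rewrite scal_vec3; destruct (x (- t)) as [[y1 y2] y3].
  unfold flow, vadd, vscal, cross, mfield, c1, c2, c3, v3; simpl; f_equal; [f_equal |]; ring.
Qed.

(* If [y] is an equilibrium with [m y = mu y] and [sqnorm y = r], then [(a_i - mu) y_i = - d_i]
   with [d = (a, b, c)]; substituting into [sqnorm y = r] and clearing denominators gives
   [radial_polynomial r mu = 0]. *)
Definition radial_polynomial (r mu : R) : R :=
  r * ((a1 - mu) ^ 2 * (a2 - mu) ^ 2 * (a3 - mu) ^ 2)
  - (a ^ 2 * (a2 - mu) ^ 2 * (a3 - mu) ^ 2 + b ^ 2 * (a1 - mu) ^ 2 * (a3 - mu) ^ 2
     + c ^ 2 * (a1 - mu) ^ 2 * (a2 - mu) ^ 2).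

Lemma radial_polynomial_seventh_difference r z h :
  let P := radial_polynomial r in
  P (z + h) - 6 * P (z + 2 * h) + 15 * P (z + 3 * h) - 20 * P (z + 4 * h)
  + 15 * P (z + 5 * h) - 6 * P (z + 6 * h) + P (z + 7 * h) = 720 * r * h ^ 6.
Proof. unfold radial_polynomial; ring. Qed.

Lemma radial_polynomial_zeros_not_dense r : r <> 0 ->
  forall z eta, 0 < eta -> exists mu, z < mu < z + eta /\ radial_polynomial r mu <> 0.
Proof.
intros Hr z eta Heta; set (h := eta / 8); assert (Hh : 0 < h) by (unfold h; lra).
apply NNPP; intros Hno.
assert (Hzero : forall k, 1 <= k <= 7 -> radial_polynomial r (z + k * h) = 0).
{ intros k Hk; apply NNPP; intros Hnz; apply Hno; exists (z + k * h).
  split; [unfold h in *; nra | exact Hnz]. }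
pose proof (radial_polynomial_seventh_difference r z h) as Hdiff; simpl in Hdiff.
replace (z + h) with (z + 1 * h) in Hdiff by ring.
rewrite !Hzero in Hdiff by lra.
assert (Hh6 : 0 < h ^ 6) by (apply pow_lt, Hh).
assert (Hprod : r * h ^ 6 = 0) by lra.
apply Rmult_integral in Hprod; destruct Hprod; lra.
Qed.

Lemma radial_polynomial_residual r mu y :
  let res := vadd (m y) (vscal (- mu) y) in
  radial_polynomial r mu =
    (a1 - mu) ^ 2 * (a2 - mu) ^ 2 * (a3 - mu) ^ 2 * (r - sqnorm y)
    + (a2 - mu) ^ 2 * (a3 - mu) ^ 2 * (c1 res * c1 res - 2 * a * c1 res)
    + (a1 - mu) ^ 2 * (a3 - mu) ^ 2 * (c2 res * c2 res - 2 * b * c2 res)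
    + (a1 - mu) ^ 2 * (a2 - mu) ^ 2 * (c3 res * c3 res - 2 * c * c3 res).
Proof.
destruct y as [[y1 y2] y3].
unfold radial_polynomial, sqnorm, dot, vadd, vscal, mfield, c1, c2, c3, v3; simpl; ring.
Qed.

Section Trajectory.

Variables (s e : R) (x : R -> vec3).
Hypotheses (Ha1 : 0 < a1) (Ha12 : a1 < a2) (Ha23 : a2 < a3) (He : e <> 0)
  (Hx : is_solution s e x).

Local Notation x1 := (fun t => c1 (x t)).
Local Notation x2 := (fun t => c2 (x t)).
Local Notation x3 := (fun t => c3 (x t)).

Lemma energy_conserved t : energy (x t) = energy (x 0).
Proof.
apply (derive_zero_constant (fun t => energy (x t))); intros u.
pose proof (is_derive_diag_quadratic x u _ (v3 a1 a2 a3) (v3 (2 * a) (2 * b) (2 * c)) (Hx u))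
  as Hd.
match type of Hd with is_derive _ _ ?d => replace 0 with d; [exact Hd |] end.
(* the flow is orthogonal to [m], which is half the gradient of the energy *)
destruct (x u) as [[y1 y2] y3].
unfold dot, flow, vadd, vscal, cross, mfield, c1, c2, c3, v3; simpl; ring.
Qed.

Lemma solution_components_bounded : bounded x1 /\ bounded x2 /\ bounded x3.
Proof.
assert (Ha2 : 0 < a2) by lra; assert (Ha3 : 0 < a3) by lra.
pose proof energy_conserved as HE.
set (h := energy (x 0)) in HE; unfold energy in HE.
split; [| split].
- apply (bounded_of_quadratic_bounded _ a1 (2 * a)
    (h + 2 * b * (2 * b) / (4 * a2) + 2 * c * (2 * c) / (4 * a3)) Ha1).
  intros t; specialize (HE t).
  pose proof (quadratic_lower_bound a2 (2 * b) (c2 (x t)) Ha2).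
  pose proof (quadratic_lower_bound a3 (2 * c) (c3 (x t)) Ha3); lra.
- apply (bounded_of_quadratic_bounded _ a2 (2 * b)
    (h + 2 * a * (2 * a) / (4 * a1) + 2 * c * (2 * c) / (4 * a3)) Ha2).
  intros t; specialize (HE t).
  pose proof (quadratic_lower_bound a1 (2 * a) (c1 (x t)) Ha1).
  pose proof (quadratic_lower_bound a3 (2 * c) (c3 (x t)) Ha3); lra.
- apply (bounded_of_quadratic_bounded _ a3 (2 * c)
    (h + 2 * a * (2 * a) / (4 * a1) + 2 * b * (2 * b) / (4 * a2)) Ha3).
  intros t; specialize (HE t).
  pose proof (quadratic_lower_bound a1 (2 * a) (c1 (x t)) Ha1).
  pose proof (quadratic_lower_bound a2 (2 * b) (c2 (x t)) Ha2); lra.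
Qed.

Lemma solution_components_bounded_lipschitz :
  bounded_lipschitz x1 /\ bounded_lipschitz x2 /\ bounded_lipschitz x3.
Proof.
destruct solution_components_bounded as [B1 [B2 B3]].
split; [| split]; split; try assumption;
  (eapply bounded_derive_lipschitz;
    [intros t; destruct (is_derive_components x t _ (Hx t)) as [D1 [D2 D3]];
     first [exact D1 | exact D2 | exact D3] |]);
  unfold flow, vadd, vscal, cross, mfield, v3; simpl; polynomial_closure.
Qed.

Lemma sqnorm_solution_derive t :
  is_derive (fun t => sqnorm (x t)) t (-2 * e * eq_defect (x t)).
Proof.
pose proof (is_derive_diag_quadratic x t _ (v3 1 1 1) (v3 0 0 0) (Hx t)) as Hd.
match type of Hd with is_derive _ _ ?d => replace (-2 * e * eq_defect (x t)) with d end.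
- eapply is_derive_ext; [| exact Hd]; intros u; unfold sqnorm, dot, v3, c1, c2, c3; simpl; ring.
- destruct (x t) as [[y1 y2] y3].
  unfold eq_defect, sqnorm, dot, flow, vadd, vscal, cross, mfield, c1, c2, c3, v3; simpl; ring.
Qed.

Lemma sqnorm_solution_tends_to : exists rho, 0 <= rho /\ tends_to (fun t => sqnorm (x t)) rho.
Proof.
destruct solution_components_bounded as [B1 [B2 B3]].
destruct (derive_sign_bounded_tends_to (fun t => sqnorm (x t)) (fun t => eq_defect (x t)) (-2 * e))
  as [rho Hrho].
- exact sqnorm_solution_derive.
- intros t; apply sqnorm_nonneg.
- unfold sqnorm, dot; polynomial_closure.
- exists rho; split; [| exact Hrho].
  apply (tends_to_lower_bound (fun t => sqnorm (x t))); [intros t; apply sqnorm_nonneg | exact Hrho].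
Qed.

Lemma eq_defect_solution_tends_to_0 : tends_to (fun t => eq_defect (x t)) 0.
Proof.
destruct sqnorm_solution_tends_to as [rho [_ Hrho]].
destruct solution_components_bounded_lipschitz as [L1 [L2 L3]].
apply (barbalat (fun t => sqnorm (x t)) _ (-2 * e) rho); [lra | exact sqnorm_solution_derive |
  intros t; apply sqnorm_nonneg | | exact Hrho].
enough (bounded_lipschitz (fun t => eq_defect (x t))) as [_ H] by exact H.
unfold eq_defect, sqnorm, dot, cross, mfield, v3; simpl; polynomial_closure.
Qed.

Section PositiveRadius.

Variable rho : R.
Hypotheses (Hrho : 0 < rho) (Hr : tends_to (fun t => sqnorm (x t)) rho).

(* The Rayleigh quotient of [m] at [x t]; the [Rmax] keeps it globally bounded and Lipschitz
   without changing it for large [t]. *)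
Definition rayleigh (t : R) : R := dot (x t) (m (x t)) / Rmax (sqnorm (x t)) (rho / 2).

Definition residual (t : R) : vec3 := vadd (m (x t)) (vscal (- rayleigh t) (x t)).

Lemma sqnorm_solution_eventually_large : exists T, forall t, T <= t -> rho / 2 < sqnorm (x t).
Proof.
destruct (Hr (rho / 2)) as [T HT]; [lra |].
exists T; intros t Ht; specialize (HT t Ht); apply Rabs_def2 in HT; lra.
Qed.

Lemma residual_tends_to_0 :
  tends_to (fun t => c1 (residual t)) 0 /\ tends_to (fun t => c2 (residual t)) 0 /\
  tends_to (fun t => c3 (residual t)) 0.
Proof.
destruct sqnorm_solution_eventually_large as [T HT].
assert (Hres : forall t, T <= t -> sqnorm (residual t) * (rho / 2) <= eq_defect (x t)).
{ intros t Ht; specialize (HT t Ht).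
  unfold eq_defect; rewrite <- (lagrange_identity (m (x t)) (x t)) by lra.
  unfold residual, rayleigh; rewrite Rmax_left by lra.
  apply Rmult_le_compat_l; [apply sqnorm_nonneg | lra]. }
assert (Hlim : tends_to (fun t => eq_defect (x t) * (2 / rho)) 0).
{ replace 0 with (0 * (2 / rho)) by ring.
  apply tends_to_mult; [exact eq_defect_solution_tends_to_0 | apply tends_to_const]. }
split; [| split]; (eapply tends_to_0_of_sq_le; [| exact Hlim]); exists T; intros t Ht;
  specialize (Hres t Ht); apply (Rmult_le_reg_r (rho / 2)); try lra;
  replace (eq_defect (x t) * (2 / rho) * (rho / 2)) with (eq_defect (x t)) by (field; lra);
  unfold sqnorm, dot in Hres; nra.
Qed.

Lemma rayleigh_bounded_lipschitz : bounded_lipschitz rayleigh.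
Proof.
destruct solution_components_bounded_lipschitz as [L1 [L2 L3]].
apply (bounded_lipschitz_div _ _ (rho / 2)); [lra | intros; apply Rmax_r | |
  apply bounded_lipschitz_max];
  unfold sqnorm, dot, mfield, v3; simpl; polynomial_closure.
Qed.

Lemma rayleigh_cluster_value_root mu :
  (forall T, exists t, T <= t /\ rayleigh t = mu) -> radial_polynomial rho mu = 0.
Proof.
intros Hmu; destruct residual_tends_to_0 as [R1 [R2 R3]].
set (h := fun t =>
  (a1 - mu) ^ 2 * (a2 - mu) ^ 2 * (a3 - mu) ^ 2 * (rho - sqnorm (x t))
  + (a2 - mu) ^ 2 * (a3 - mu) ^ 2 * (c1 (residual t) * c1 (residual t) - 2 * a * c1 (residual t))
  + (a1 - mu) ^ 2 * (a3 - mu) ^ 2 * (c2 (residual t) * c2 (residual t) - 2 * b * c2 (residual t))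
  + (a1 - mu) ^ 2 * (a2 - mu) ^ 2 * (c3 (residual t) * c3 (residual t) - 2 * c * c3 (residual t))).
assert (Hh : tends_to h 0).
{ eassert (Hl : tends_to h _) by (unfold h; polynomial_closure).
  match type of Hl with tends_to _ ?l => replace 0 with l by ring; exact Hl end. }
apply (tends_to_frequently_eq h 0 _ Hh); intros T.
destruct (Hmu T) as [t [Ht Hrt]]; exists t; split; [exact Ht |].
unfold h, residual; rewrite Hrt; symmetry; apply radial_polynomial_residual.
Qed.

Lemma rayleigh_tends_to : exists l, tends_to rayleigh l.
Proof.
destruct rayleigh_bounded_lipschitz as [Hb Hlip].
apply (tends_to_of_sparse_cluster_values rayleigh (radial_polynomial rho)
  (lipschitz_continuity _ Hlip) Hb rayleigh_cluster_value_root).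
apply radial_polynomial_zeros_not_dense; lra.
Qed.

Lemma solution_tends_to_positive_radius : exists y, tends_to3 x y.
Proof.
destruct rayleigh_tends_to as [l Hl].
destruct residual_tends_to_0 as [R1 [R2 R3]].
destruct solution_components_bounded_lipschitz as [[_ L1] [[_ L2] [_ L3]]].
apply lipschitz_continuity in L1, L2, L3.
assert (C1 : a1 <> l -> tends_to x1 (- a / (a1 - l))).
{ intros Hne; apply (tends_to_affine_solve _ _ rayleigh _ _ _ Hne Hl R1).
  intros t; unfold residual, vadd, vscal, mfield, c1, v3; simpl; ring. }
assert (C2 : a2 <> l -> tends_to x2 (- b / (a2 - l))).
{ intros Hne; apply (tends_to_affine_solve _ _ rayleigh _ _ _ Hne Hl R2).
  intros t; unfold residual, vadd, vscal, mfield, c2, v3; simpl; ring. }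
assert (C3 : a3 <> l -> tends_to x3 (- c / (a3 - l))).
{ intros Hne; apply (tends_to_affine_solve _ _ rayleigh _ _ _ Hne Hl R3).
  intros t; unfold residual, vadd, vscal, mfield, c3, v3; simpl; ring. }
assert (Hr1 : tends_to (fun t => c1 (x t) * c1 (x t) + c2 (x t) * c2 (x t) + c3 (x t) * c3 (x t)) rho)
  by exact Hr.
assert (Hr2 : tends_to (fun t => c2 (x t) * c2 (x t) + c1 (x t) * c1 (x t) + c3 (x t) * c3 (x t)) rho)
  by (revert Hr1; apply tends_to_ext; intros; ring).
assert (Hr3 : tends_to (fun t => c3 (x t) * c3 (x t) + c1 (x t) * c1 (x t) + c2 (x t) * c2 (x t)) rho)
  by (revert Hr1; apply tends_to_ext; intros; ring).
(* the [a_i] are distinct, so at most one coordinate escapes [tends_to_affine_solve] *)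
destruct (Req_dec a1 l) as [E1 | N1]; [| destruct (Req_dec a2 l) as [E2 | N2];
  [| destruct (Req_dec a3 l) as [E3 | N3]]].
- destruct (tends_to_of_sum_sq _ _ _ _ _ _ L1 Hr1 (C2 ltac:(lra)) (C3 ltac:(lra))) as [y1 K1].
  exists (v3 y1 (- b / (a2 - l)) (- c / (a3 - l))).
  split; [| split]; [exact K1 | exact (C2 ltac:(lra)) | exact (C3 ltac:(lra))].
- destruct (tends_to_of_sum_sq _ _ _ _ _ _ L2 Hr2 (C1 N1) (C3 ltac:(lra))) as [y2 K2].
  exists (v3 (- a / (a1 - l)) y2 (- c / (a3 - l))).
  split; [| split]; [exact (C1 N1) | exact K2 | exact (C3 ltac:(lra))].
- destruct (tends_to_of_sum_sq _ _ _ _ _ _ L3 Hr3 (C1 N1) (C2 N2)) as [y3 K3].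
  exists (v3 (- a / (a1 - l)) (- b / (a2 - l)) y3).
  split; [| split]; [exact (C1 N1) | exact (C2 N2) | exact K3].
- exists (v3 (- a / (a1 - l)) (- b / (a2 - l)) (- c / (a3 - l))).
  split; [| split]; [exact (C1 N1) | exact (C2 N2) | exact (C3 N3)].
Qed.

End PositiveRadius.

Lemma solution_tends_to_equilibrium : exists y, Eq_set a1 a2 a3 a b c y /\ tends_to3 x y.
Proof.
assert (Hconv : exists y, tends_to3 x y).
{ destruct sqnorm_solution_tends_to as [rho [Hrho0 Hrho]].
  destruct (Req_dec rho 0) as [-> | Hne].
  - exists (v3 0 0 0); split; [| split];
      (eapply tends_to_0_of_sq_le; [| exact Hrho]); exists 0; intros t _; unfold sqnorm, dot; nra.
  - apply (solution_tends_to_positive_radius rho); [lra | exact Hrho]. }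
destruct Hconv as [y Hy]; exists y; split; [| exact Hy].
destruct Hy as [K1 [K2 K3]].
apply Eq_set_eq_defect, (tends_to_unique (fun t => eq_defect (x t)));
  [| exact eq_defect_solution_tends_to_0].
unfold eq_defect, sqnorm, dot, cross, mfield, v3; simpl; polynomial_closure.
Qed.

End Trajectory.
End Flow.

Theorem theorem5p2 (a1 a2 a3 a b c eps : R) (x : R -> vec3) :
  0 < a1 -> a1 < a2 -> a2 < a3 -> eps <> 0 ->
  is_revised_solution a1 a2 a3 a b c eps x ->
  exists xm xM : vec3,
    Eq_set a1 a2 a3 a b c xm /\ Eq_set a1 a2 a3 a b c xM /\
    filterlim x (Rbar_locally m_infty) (locally xM) /\
    filterlim x (Rbar_locally p_infty) (locally xm).
Proof.
intros Ha1 Ha12 Ha23 Heps Hx.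
apply revised_solution_is_solution in Hx.
destruct (solution_tends_to_equilibrium a1 a2 a3 a b c 1 eps x Ha1 Ha12 Ha23 Heps Hx)
  as [xm [Hxm Hfwd]].
assert (Hneps : - eps <> 0) by lra.
destruct (solution_tends_to_equilibrium a1 a2 a3 a b c (- 1) (- eps) (fun t => x (- t))
  Ha1 Ha12 Ha23 Hneps (is_solution_reverse _ _ _ _ _ _ _ _ _ Hx)) as [xM [HxM Hbwd]].
exists xm, xM; split; [exact Hxm | split; [exact HxM | split]].
- apply filterlim_m_infty_reverse, tends_to3_filterlim, Hbwd.
- apply tends_to3_filterlim, Hfwd.
Qed.
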